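(* An $AB\bar B$-formula $\varphi$ is satisfied by some finite interval structure if and only if it is featured by some $\varphi$-compass structure of length $N\le 2^{2^{7|\varphi|}}$.
   Context: Syntax: $AB\bar B$-formulas are built from a set $\mathcal{P}$ of propositional variables using $\neg$, $\vee$ and unary modalities $\langle A\rangle,\langle B\rangle,\langle\bar B\rangle$ ($[R]\psi=\neg\langle R\rangle\neg\psi$); $|\varphi|$ is the size (number of subformulas) of $\varphi$. Semantics: an ordinal $N\le\omega$ is identified with $\{0,\dots,N-1\}$; $\mathbb{I}_N$ is the set of intervals $[x,y]$ with $x,y\in N$, $x<y$. $[x,y]\,A\,[x',y']$ iff $y=x'$; $[x,y]\,B\,[x',y']$ iff $x=x'$ and $y'<y$; $[x,y]\,\bar B\,[x',y']$ iff $x=x'$ and $y<y'$. An interval structure $\mathcal{S}=(\mathbb{I}_N,A,B,\bar B,\sigma)$ has $\sigma:\mathbb{I}_N\to\mathcal{P}(\mathcal{P})$; it is finite if $N<\omega$. $\mathcal{S},I\models p$ iff $p\in\sigma(I)$; booleans as usual; $\mathcal{S},I\models\langle R\rangle\psi$ iff some $J$ with $I\,R\,J$ has $\mathcal{S},J\models\psi$. $\mathcal{S}$ satisfies $\varphi$ if $\mathcal{S},I\models\varphi$ for some $I$. Atoms: $Cl(\varphi)$ is the set of subformulas of $\varphi$ and their negations (identifying $\neg\neg\alpha$ with $\alpha$, $\neg\langle R\rangle\alpha$ with $[R]\neg\alpha$); $Cl^+(\varphi)$ adds all $\langle R\rangle\alpha$, $\neg\langle R\rangle\alpha$ for $R\in\{A,B,\bar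 B\}$, $\alpha\in Cl(\varphi)$. A $\varphi$-atom is a nonempty $F\subseteq Cl^+(\varphi)$ with: $\alpha\in F$ iff $\neg\alpha\notin F$ for all $\alpha\in Cl^+(\varphi)$, and $\alpha\vee\beta\in F$ iff $\alpha\in F$ or $\beta\in F$. $obs(F)=\{\alpha\in Cl(\varphi):\alpha\in F\}$, $Req_R(F)=\{\alpha\in Cl(\varphi):\langle R\rangle\alpha\in F\}$. $F\leadsto_A G$ iff $Req_A(F)=obs(G)\cup Req_B(G)\cup Req_{\bar B}(G)$; $F\leadsto_B G$ iff $obs(F)\cup Req_{\bar B}(F)\subseteq Req_{\bar B}(G)\subseteq obs(F)\cup Req_{\bar B}(F)\cup Req_B(F)$ and $obs(G)\cup Req_B(G)\subseteq Req_B(F)\subseteq obs(G)\cup Req_B(G)\cup Req_{\bar B}(G)$. Compass structures: $\mathbb{P}_N=\{(x,y):0\le x<y<N\}$ with relations $A,B,\bar B$ as for the intervals $[x,y]$. A $\varphi$-compass structure of length $N$ is $(\mathbb{P}_N,\mathcal{L})$, $\mathcal{L}$ mapping points to $\varphi$-atoms, such that $p\,R\,q$ implies $\mathcal{L}(p)\leadsto_R\mathcal{L}(q)$ for $R\in\{A,B\}$ (consistency), and for every $p$, $R\in\{A,B,\bar B\}$, $\alpha\in Req_R(\mathcal{L}(p))$ there is $q$ with $p\,R\,q$ and $\alpha\in obs(\mathcal{L}(q))$ (fulfillment). It features $\alpha$ if $\alpha\in\mathcal{L}(p)$ for some $p$. *)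

From Stdlib Require Import List Arith.
Import ListNotations.

Inductive rel : Type := RA | RB | RBbar.

Inductive formula : Type :=
| Var : nat -> formula
| Neg : formula -> formula
| Or  : formula -> formula -> formula
| Dia : rel -> formula -> formula.

Definition rel_eq_dec : forall r s : rel, {r = s} + {r <> s}.
Proof. decide equality. Defined.

Definition formula_eq_dec : forall f g : formula, {f = g} + {f <> g}.
Proof. decide equality; first [apply Nat.eq_dec | apply rel_eq_dec]. Defined.

Definition Box (R : rel) (f : formula) : formula := Neg (Dia R (Neg f)).

Fixpoint subformulas (f : formula) : list formula :=
  f :: match f with
       | Var _ => []
       | Neg g => subformulas g
       | Or g h => subformulas g ++ subformulas h
       | Dia _ g => subformulas g
       end.

Definition fsize (f : formula) : nat := length (nodup formula_eq_dec (subformulas f)).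

Definition subformula (g f : formula) : Prop := In g (subformulas f).

(* A finite interval structure of length N: intervals [x,y] with x < y < N,
   labelling sigma x y p  <->  p \in sigma([x,y]). *)
Fixpoint sat (N : nat) (sigma : nat -> nat -> nat -> Prop) (x y : nat) (f : formula) : Prop :=
  match f with
  | Var p => sigma x y p
  | Neg g => ~ sat N sigma x y g
  | Or g h => sat N sigma x y g \/ sat N sigma x y h
  | Dia RA g => exists z, y < z /\ z < N /\ sat N sigma y z g
  | Dia RB g => exists z, x < z /\ z < y /\ sat N sigma x z g
  | Dia RBbar g => exists z, y < z /\ z < N /\ sat N sigma x z g
  end.

Definition finitely_satisfiable (phi : formula) : Prop :=
  exists (N : nat) (sigma : nat -> nat -> nat -> Prop) (x y : nat),
    x < y /\ y < N /\ sat N sigma x y phi.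

Definition neg (f : formula) : formula :=
  match f with Neg g => g | _ => Neg f end.

(* normal form: canonical representative modulo ~~a = a
   (hence also ~<R>a = [R]~a) *)
Fixpoint nf (f : formula) : formula :=
  match f with
  | Var p => Var p
  | Neg g => neg (nf g)
  | Or g h => Or (nf g) (nf h)
  | Dia R g => Dia R (nf g)
  end.

Definition InCl (phi a : formula) : Prop :=
  exists b, subformula b phi /\ (a = nf b \/ a = neg (nf b)).

Definition InClp (phi a : formula) : Prop :=
  InCl phi a \/
  exists (R : rel) (b : formula), InCl phi b /\ (a = Dia R b \/ a = Neg (Dia R b)).

Definition atom (phi : formula) (F : formula -> Prop) : Prop :=
  (exists a, F a) /\
  (forall a, F a -> InClp phi a) /\
  (forall a, InClp phi a -> (F a <-> ~ F (neg a))) /\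
  (forall a b, InClp phi (Or a b) -> (F (Or a b) <-> F a \/ F b)).

Definition obs (phi : formula) (F : formula -> Prop) (a : formula) : Prop :=
  InCl phi a /\ F a.
Definition Req (phi : formula) (R : rel) (F : formula -> Prop) (a : formula) : Prop :=
  InCl phi a /\ F (Dia R a).

Definition leadsto_A (phi : formula) (F G : formula -> Prop) : Prop :=
  forall a, Req phi RA F a <-> (obs phi G a \/ Req phi RB G a \/ Req phi RBbar G a).

Definition leadsto_B (phi : formula) (F G : formula -> Prop) : Prop :=
  (forall a, (obs phi F a \/ Req phi RBbar F a) -> Req phi RBbar G a) /\
  (forall a, Req phi RBbar G a -> (obs phi F a \/ Req phi RBbar F a \/ Req phi RB F a)) /\
  (forall a, (obs phi G a \/ Req phi RB G a) -> Req phi RB F a) /\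
  (forall a, Req phi RB F a -> (obs phi G a \/ Req phi RB G a \/ Req phi RBbar G a)).

Definition point (N x y : nat) : Prop := x < y /\ y < N.

Definition prel (R : rel) (x y x' y' : nat) : Prop :=
  match R with
  | RA => y = x'
  | RB => x = x' /\ y' < y
  | RBbar => x = x' /\ y < y'
  end.

Definition compass (phi : formula) (N : nat) (L : nat -> nat -> formula -> Prop) : Prop :=
  (forall x y, point N x y -> atom phi (L x y)) /\
  (forall x y x' y', point N x y -> point N x' y' ->
     prel RA x y x' y' -> leadsto_A phi (L x y) (L x' y')) /\
  (forall x y x' y', point N x y -> point N x' y' ->
     prel RB x y x' y' -> leadsto_B phi (L x y) (L x' y')) /\
  (forall x y R a, point N x y -> Req phi R (L x y) a ->
     exists x' y', point N x' y' /\ prel R x y x' y' /\ obs phi (L x' y') a).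

Definition features (L : nat -> nat -> formula -> Prop) (N : nat) (a : formula) : Prop :=
  exists x y, point N x y /\ L x y (nf a).

From Stdlib Require Import List Arith Lia Classical ClassicalEpsilon
  FunctionalExtensionality PropExtensionality.
Import ListNotations.

(* A phi-compass structure is a model: by induction on subformulas, a point's atom
   contains exactly the subformulas true on it when letters are read off the labels.
   Conversely, labelling each interval of a finite model by the members of [Cl^+] it
   satisfies gives a compass structure.  An atom is determined by 7|phi| bits, so a
   row (the points sharing a right endpoint) carries one of at most 2^2^(7|phi|)
   sets of atoms.  In a longer structure two rows y < y + d carry the same set;
   cutting out the rows in between, and re-reading each point (i, j) above with
   i < y off a point of row y + d carrying the atom of (i, y), yields a shorter
   compass structure.  Shifting a satisfying interval to start at 0 puts phi or
   <Bbar>phi into the atom of point (0, 1), which the cutting never touches. *)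

Local Ltac solve_point := unfold point, prel in *; lia.
Local Ltac close_by_bounds := repeat (split; [solve_point |]); assumption.

Lemma nf_not_double_neg f h : nf f <> Neg (Neg h).
Proof.
  revert h; induction f; intros h E; simpl in E; try discriminate.
  unfold neg in E; destruct (nf f); inversion E; subst.
  exact (IHf (Neg h) eq_refl).
Qed.

Lemma neg_involutive_nf f : neg (neg (nf f)) = nf f.
Proof.
  pose proof (nf_not_double_neg f) as Hf.
  destruct (nf f) as [| g | |]; simpl; auto.
  destruct g; simpl; auto. exfalso; exact (Hf g eq_refl).
Qed.

Lemma subformula_refl f : subformula f f.
Proof. destruct f; left; reflexivity. Qed.

Lemma subformula_trans f g h : subformula g f -> subformula h g -> subformula h f.
Proof.
  unfold subformula; revert g h; induction f; intros g h Hg Hh;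
    simpl in Hg; destruct Hg as [<- | Hg]; auto; simpl; right.
  - destruct Hg.
  - eapply IHf; eauto.
  - apply in_or_app; apply in_app_or in Hg as [Hg | Hg];
      [left; eapply IHf1 | right; eapply IHf2]; eauto.
  - eapply IHf; eauto.
Qed.

Lemma subformula_Neg_inv g phi : subformula (Neg g) phi -> subformula g phi.
Proof.
  intro H; apply (subformula_trans _ _ _ H); right; apply subformula_refl.
Qed.

Lemma subformula_Or_inv g h phi :
  subformula (Or g h) phi -> subformula g phi /\ subformula h phi.
Proof.
  intro H; split; apply (subformula_trans _ _ _ H); right; apply in_or_app;
    [left | right]; apply subformula_refl.
Qed.

Lemma subformula_Dia_inv R g phi : subformula (Dia R g) phi -> subformula g phi.
Proof.
  intro H; apply (subformula_trans _ _ _ H); right; apply subformula_refl.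
Qed.

Lemma InCl_nf phi b : subformula b phi -> InCl phi (nf b).
Proof. intro; exists b; auto. Qed.

Lemma InCl_neg phi a : InCl phi a -> InCl phi (neg a).
Proof.
  intros (b & Hb & [-> | ->]); exists b; split; auto.
  left; apply neg_involutive_nf.
Qed.

Lemma InClp_neg phi a : InClp phi a -> InClp phi (neg a).
Proof.
  intros [H | (R & b & Hb & [-> | ->])].
  - left; apply InCl_neg, H.
  - right; exists R, b; auto.
  - right; exists R, b; auto.
Qed.

Lemma InClp_Dia phi R a : InCl phi a -> InClp phi (Dia R a).
Proof. intro; right; exists R, a; auto. Qed.

Lemma nf_Or_inv c a b : nf c = Or a b \/ nf c = Neg (Or a b) ->
  exists c1 c2, subformula c1 c /\ subformula c2 c /\ a = nf c1 /\ b = nf c2.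
Proof.
  induction c as [p | c IHc | c1 _ c2 _ | R c _]; simpl; intro H.
  - destruct H; discriminate.
  - assert (Hin : forall e, subformula e c -> subformula e (Neg c))
      by (intros e He; right; exact He).
    pose proof (nf_not_double_neg c) as Hc.
    destruct (nf c) eqn:E; simpl in H; destruct H as [H | H]; inversion H; subst.
    + destruct (IHc (or_intror eq_refl)) as (c1 & c2 & ? & ? & ? & ?).
      exists c1, c2; auto.
    + exfalso; eapply Hc; reflexivity.
    + destruct (IHc (or_introl eq_refl)) as (c1 & c2 & ? & ? & ? & ?).
      exists c1, c2; auto.
  - destruct H as [H | H]; inversion H; subst.
    exists c1, c2; repeat split; auto; right; apply in_or_app;
      [left | right]; apply subformula_refl.
  - destruct H; discriminate.
Qed.

Lemma InClp_Or_inv phi a b : InClp phi (Or a b) -> InCl phi a /\ InCl phi b.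
Proof.
  assert (Hnf : forall c, subformula c phi -> nf c = Or a b \/ nf c = Neg (Or a b) ->
            InCl phi a /\ InCl phi b).
  { intros c Hc H; destruct (nf_Or_inv c a b H) as (c1 & c2 & H1 & H2 & -> & ->).
    split; apply InCl_nf; eapply subformula_trans; eauto. }
  intros [(c & Hc & [H | H]) | (R & c & _ & [H | H])]; try discriminate.
  - apply (Hnf c Hc); left; auto.
  - apply (Hnf c Hc); right; destruct (nf c); simpl in H; inversion H; auto.
Qed.

Lemma sat_neg N s x y a : sat N s x y (neg a) <-> ~ sat N s x y a.
Proof. destruct a; simpl; tauto. Qed.

Lemma sat_nf N s f x y : sat N s x y (nf f) <-> sat N s x y f.
Proof.
  revert x y; induction f as [p | f IH | f1 IH1 f2 IH2 | R f IH]; intros x y; simpl.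
  - tauto.
  - rewrite sat_neg, IH; tauto.
  - rewrite IH1, IH2; tauto.
  - destruct R; simpl; split; intros (z & H1 & H2 & H3); exists z;
      repeat split; auto; apply IH; auto.
Qed.

Lemma sat_shift N s x0 f x y :
  sat (N - x0) (fun x y p => s (x + x0) (y + x0) p) x y f <->
  sat N s (x + x0) (y + x0) f.
Proof.
  revert x y; induction f as [p | f IH | f1 IH1 f2 IH2 | R f IH]; intros x y; simpl.
  - tauto.
  - rewrite IH; tauto.
  - rewrite IH1, IH2; tauto.
  - destruct R; split; intros (z & H1 & H2 & H3).
    all: first [ exists (z + x0); rewrite IH in H3; repeat split; auto; lia
               | exists (z - x0); rewrite IH; replace (z - x0 + x0) with z by lia;
                 repeat split; auto; lia ].
Qed.

Section TruthLabelling.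

Variables (phi : formula) (N : nat) (s : nat -> nat -> nat -> Prop).

Definition truth_label (x y : nat) (a : formula) : Prop := InClp phi a /\ sat N s x y a.

Lemma truth_label_obs x y a :
  obs phi (truth_label x y) a <-> InCl phi a /\ sat N s x y a.
Proof. unfold obs, truth_label; split; [tauto | intros [Ha H]; repeat split; auto; left; auto]. Qed.

Lemma truth_label_Req R x y a :
  Req phi R (truth_label x y) a <-> InCl phi a /\ sat N s x y (Dia R a).
Proof. unfold Req, truth_label; split; [tauto | intros [Ha H]; repeat split; auto; apply InClp_Dia, Ha]. Qed.

Lemma truth_label_atom x y : atom phi (truth_label x y).
Proof.
  assert (Hphi : InCl phi (nf phi)) by apply InCl_nf, subformula_refl.
  unfold truth_label; split; [| split; [| split]].
  - destruct (classic (sat N s x y (nf phi))) as [H | H].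
    + exists (nf phi); split; [left |]; auto.
    + exists (neg (nf phi)); split; [left; apply InCl_neg, Hphi | apply sat_neg, H].
  - tauto.
  - intros a Ha; pose proof (InClp_neg phi a Ha); rewrite sat_neg; tauto.
  - intros a b Hab; destruct (InClp_Or_inv phi a b Hab) as [Ha Hb]; simpl.
    assert (InClp phi a) by (left; auto); assert (InClp phi b) by (left; auto); tauto.
Qed.

Lemma truth_label_leadsto_A x y z : x < y -> y < z -> z < N ->
  leadsto_A phi (truth_label x y) (truth_label y z).
Proof.
  intros Hxy Hyz HzN a; rewrite truth_label_Req, truth_label_obs, !truth_label_Req; simpl.
  split.
  - intros [Ha (w & Hyw & HwN & Hw)].
    destruct (lt_eq_lt_dec w z) as [[Hlt | <-] | Hgt]; [right; left | left | right; right];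
      split; eauto.
  - intros [[Ha Hz] | [[Ha (w & ? & ? & ?)] | [Ha (w & ? & ? & ?)]]]; split; auto.
    + exists z; auto.
    + exists w; repeat split; auto; lia.
    + exists w; repeat split; auto; lia.
Qed.

Lemma truth_label_leadsto_B x y z : x < z -> z < y -> y < N ->
  leadsto_B phi (truth_label x y) (truth_label x z).
Proof.
  intros Hxz Hzy HyN; unfold leadsto_B;
    setoid_rewrite truth_label_obs; setoid_rewrite truth_label_Req; simpl.
  split; [| split; [| split]].
  - intros a [[Ha H] | [Ha (w & ? & ? & ?)]]; split; auto.
    + exists y; auto.
    + exists w; repeat split; auto; lia.
  - intros a [Ha (w & Hzw & HwN & Hw)].
    destruct (lt_eq_lt_dec w y) as [[Hlt | <-] | Hgt]; [right; right | left | right; left];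
      split; auto; exists w; repeat split; auto; lia.
  - intros a [[Ha H] | [Ha (w & ? & ? & ?)]]; split; auto.
    + exists z; auto.
    + exists w; repeat split; auto; lia.
  - intros a [Ha (w & Hxw & Hwy & Hw)].
    destruct (lt_eq_lt_dec w z) as [[Hlt | <-] | Hgt]; [right; left | left | right; right];
      split; auto; exists w; repeat split; auto; lia.
Qed.

Lemma truth_label_compass : compass phi N truth_label.
Proof.
  split; [| split; [| split]].
  - intros x y _; apply truth_label_atom.
  - intros x y x' y' Hp Hp' ->; apply truth_label_leadsto_A; solve_point.
  - intros x y x' y' Hp Hp' [<- Hy]; apply truth_label_leadsto_B; solve_point.
  - intros x y R a Hp Hr; apply truth_label_Req in Hr as [Ha Hr].
    destruct R; simpl in Hr; destruct Hr as (z & Hz1 & Hz2 & Hz);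
      [exists y, z | exists x, z | exists x, z];
      (split; [solve_point | split; [simpl; auto | apply truth_label_obs; auto]]).
Qed.

End TruthLabelling.

Lemma compass_truth_lemma phi N L : compass phi N L ->
  forall b, subformula b phi -> forall x y, point N x y ->
  (sat N (fun x y p => L x y (Var p)) x y b <-> L x y (nf b)).
Proof.
  intros (Hat & HA & HB & Hf).
  induction b as [p | b IH | b1 IH1 b2 IH2 | R b IH]; intros Hsub x y Hp; simpl.
  - tauto.
  - pose proof (subformula_Neg_inv _ _ Hsub) as Hb.
    destruct (Hat x y Hp) as (_ & _ & Hneg & _).
    rewrite IH, (Hneg (nf b)) by (auto; left; apply InCl_nf, Hb).
    destruct (classic (L x y (neg (nf b)))); tauto.
  - destruct (subformula_Or_inv _ _ _ Hsub) as [Hb1 Hb2].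
    destruct (Hat x y Hp) as (_ & _ & _ & Hor).
    rewrite IH1, IH2, Hor by (auto; left; exists (Or b1 b2); auto); tauto.
  - pose proof (subformula_Dia_inv _ _ _ Hsub) as Hb.
    assert (Hc : InCl phi (nf b)) by apply InCl_nf, Hb.
    destruct R; split.
    + intros (z & Hyz & HzN & Hz); rewrite IH in Hz by (auto; solve_point).
      apply (HA x y y z Hp ltac:(solve_point) eq_refl); left; split; auto.
    + intro H; destruct (Hf x y RA (nf b) Hp (conj Hc H))
        as (x' & z & Hp' & Hr & _ & Hz); simpl in Hr; subst x'.
      exists z; rewrite IH; repeat split; auto; solve_point.
    + intros (z & Hxz & Hzy & Hz); rewrite IH in Hz by (auto; solve_point).
      apply (HB x y x z Hp ltac:(solve_point) (conj eq_refl Hzy)); left; split; auto.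
    + intro H; destruct (Hf x y RB (nf b) Hp (conj Hc H))
        as (x' & z & Hp' & [<- Hr] & _ & Hz).
      exists z; rewrite IH; repeat split; auto; solve_point.
    + intros (z & Hyz & HzN & Hz); rewrite IH in Hz by (auto; solve_point).
      apply (HB x z x y ltac:(solve_point) Hp (conj eq_refl Hyz)); left; split; auto.
    + intro H; destruct (Hf x y RBbar (nf b) Hp (conj Hc H))
        as (x' & z & Hp' & [<- Hr] & _ & Hz).
      exists z; rewrite IH; repeat split; auto; solve_point.
Qed.

(* The formulas true on some interval with the same left endpoint as a G-labelled
   point: [~>_A] says [Req_A(F) = starts(G)], and [~>_B] leaves it unchanged. *)
Definition starts (phi : formula) (G : formula -> Prop) (a : formula) : Prop :=
  obs phi G a \/ Req phi RB G a \/ Req phi RBbar G a.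

Lemma leadsto_B_trans phi F G H :
  leadsto_B phi F G -> leadsto_B phi G H -> leadsto_B phi F H.
Proof.
  intros (FG1 & FG2 & FG3 & FG4) (GH1 & GH2 & GH3 & GH4).
  split; [| split; [| split]]; intros a Ha.
  - apply GH1; right; apply FG1, Ha.
  - destruct (GH2 a Ha) as [H1 | [H1 | H1]]; auto.
    all: right; right; apply FG3; auto.
  - apply FG3; right; apply GH3, Ha.
  - destruct (FG4 a Ha) as [H1 | [H1 | H1]]; auto.
    all: right; right; apply GH1; auto.
Qed.

Lemma leadsto_B_starts phi F G :
  leadsto_B phi F G -> forall a, starts phi F a <-> starts phi G a.
Proof.
  intros (FG1 & FG2 & FG3 & FG4) a; unfold starts; split.
  - intros [H1 | [H1 | H1]]; auto.
  - intros [H1 | [H1 | H1]]; auto.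
    apply FG2 in H1; tauto.
Qed.

Lemma compass_starts_fulfilled phi N L x y a : compass phi N L -> point N x y ->
  starts phi (L x y) a -> exists y', point N x y' /\ L x y' a.
Proof.
  intros (_ & _ & _ & Hf) Hp [[_ H] | [Hr | Hr]]; eauto.
  - destruct (Hf x y RB a Hp Hr) as (x' & y' & Hp' & [<- _] & _ & H); eauto.
  - destruct (Hf x y RBbar a Hp Hr) as (x' & y' & Hp' & [<- _] & _ & H); eauto.
Qed.

Section Contraction.

Variables (phi : formula) (N : nat) (L : nat -> nat -> formula -> Prop).
Variables (y d : nat) (g : nat -> nat).

Hypothesis HL : compass phi N L.
Hypothesis yd_lt_N : y + d < N.
Hypothesis g_spec : forall x, x < y -> g x < y + d /\ L (g x) (y + d) = L x y.

(* Rows [y+1 .. y+d] are cut out.  Above row [y], the point (i, j) is read off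
   (i + d, j + d) when [y <= i], and off (g i, j + d) when [i < y]: column [g i] of
   row [y + d] carries the atom of (i, y). *)
Definition collapse_col (i : nat) : nat := if i <? y then g i else i + d.

Definition collapse (i j : nat) : formula -> Prop :=
  if j <=? y then L i j else L (collapse_col i) (j + d).

Lemma collapse_low i j : j <= y -> collapse i j = L i j.
Proof. intro Hj; unfold collapse; rewrite (proj2 (Nat.leb_le j y) Hj); reflexivity. Qed.

Lemma collapse_high i j : y < j -> collapse i j = L (collapse_col i) (j + d).
Proof. intro Hj; unfold collapse; rewrite (proj2 (Nat.leb_gt j y) Hj); reflexivity. Qed.

Lemma collapse_col_low i : i < y -> collapse_col i = g i.
Proof. intro Hi; unfold collapse_col; rewrite (proj2 (Nat.ltb_lt i y) Hi); reflexivity. Qed.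

Lemma collapse_col_high i : y <= i -> collapse_col i = i + d.
Proof. intro Hi; unfold collapse_col; rewrite (proj2 (Nat.ltb_ge i y) Hi); reflexivity. Qed.

Lemma collapse_col_point i j : i < j -> y < j -> j < N - d ->
  point N (collapse_col i) (j + d).
Proof.
  intros Hij Hj HjN; destruct (Nat.lt_ge_cases i y) as [Hi | Hi].
  - rewrite collapse_col_low by exact Hi; destruct (g_spec i Hi); solve_point.
  - rewrite collapse_col_high by exact Hi; solve_point.
Qed.

Lemma collapse_atom i j : point (N - d) i j -> atom phi (collapse i j).
Proof.
  destruct HL as [Hat _]; intro Hp; destruct (Nat.le_gt_cases j y).
  - rewrite collapse_low by solve_point; apply Hat; solve_point.
  - rewrite collapse_high by solve_point; apply Hat, collapse_col_point; solve_point.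
Qed.

Lemma collapse_leadsto_A i j k : point (N - d) i j -> point (N - d) j k ->
  leadsto_A phi (collapse i j) (collapse j k).
Proof.
  destruct HL as (_ & HA & HB & _); intros Hij Hjk.
  destruct (Nat.le_gt_cases k y) as [Hk | Hk]; [| destruct (Nat.le_gt_cases j y) as [Hj | Hj]].
  - rewrite !collapse_low by solve_point; apply HA; solve_point.
  - rewrite collapse_low, collapse_high by solve_point.
    destruct (Nat.eq_dec j y) as [-> | Hjy].
    + rewrite collapse_col_high by solve_point.
      destruct (g_spec i ltac:(solve_point)) as [Hgi <-].
      apply HA; solve_point.
    + rewrite collapse_col_low by solve_point.
      destruct (g_spec j ltac:(lia)) as [Hgj Hrow].
      assert (A : leadsto_A phi (L i j) (L j y)) by (apply HA; solve_point).
      assert (B : leadsto_B phi (L (g j) (k + d)) (L (g j) (y + d)))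
        by (apply HB; solve_point).
      rewrite Hrow in B.
      intro a; rewrite (A a); exact (iff_sym (leadsto_B_starts _ _ _ B a)).
  - rewrite !collapse_high, (collapse_col_high j) by solve_point.
    apply HA; [apply collapse_col_point | |]; solve_point.
Qed.

Lemma collapse_leadsto_B i j j' : point (N - d) i j -> point (N - d) i j' -> j' < j ->
  leadsto_B phi (collapse i j) (collapse i j').
Proof.
  destruct HL as (_ & _ & HB & _); intros Hij Hij' Hj'j.
  destruct (Nat.le_gt_cases j y) as [Hj | Hj]; [| destruct (Nat.le_gt_cases j' y) as [Hj' | Hj']].
  - rewrite !collapse_low by solve_point; apply HB; solve_point.
  - rewrite collapse_high, collapse_low, collapse_col_low by solve_point.
    destruct (g_spec i ltac:(solve_point)) as [Hgi Hrow].
    assert (B : leadsto_B phi (L (g i) (j + d)) (L (g i) (y + d)))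
      by (apply HB; solve_point).
    rewrite Hrow in B.
    destruct (Nat.eq_dec j' y) as [-> | Hne]; [exact B |].
    apply (leadsto_B_trans _ _ _ _ B), HB; solve_point.
  - rewrite !collapse_high by solve_point.
    apply HB; [apply collapse_col_point | apply collapse_col_point |]; solve_point.
Qed.

Lemma collapse_fulfil_Bbar i j a : point (N - d) i j -> Req phi RBbar (collapse i j) a ->
  exists j', j < j' /\ j' < N - d /\ obs phi (collapse i j') a.
Proof.
  destruct HL as (_ & _ & HB & Hf); intros Hij Hr.
  destruct (Nat.le_gt_cases j y) as [Hj | Hj].
  - rewrite collapse_low in Hr by solve_point.
    destruct (Hf i j RBbar a ltac:(solve_point) Hr) as (x' & u & Hiu & [<- Hju] & Ho).
    destruct (Nat.le_gt_cases u y) as [Hu | Hu].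
    + exists u; rewrite collapse_low by solve_point; close_by_bounds.
    + destruct (g_spec i ltac:(solve_point)) as [Hgi Hrow].
      assert (Hr' : Req phi RBbar (L (g i) (y + d)) a).
      { rewrite Hrow.
        apply (HB i u i y ltac:(solve_point) ltac:(solve_point) ltac:(solve_point)).
        left; exact Ho. }
      destruct (Hf (g i) (y + d) RBbar a ltac:(solve_point) Hr')
        as (x' & w & Hw & [<- Hyw] & Ho').
      exists (w - d); rewrite collapse_high, collapse_col_low by solve_point.
      replace (w - d + d) with w by solve_point; close_by_bounds.
  - rewrite collapse_high in Hr by solve_point.
    destruct (Hf _ _ RBbar a (collapse_col_point i j ltac:(solve_point) Hj ltac:(solve_point)) Hr)
      as (x' & w & Hw & [<- Hjw] & Ho).
    exists (w - d); rewrite collapse_high by solve_point.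
    replace (w - d + d) with w by solve_point; close_by_bounds.
Qed.

Lemma collapse_fulfil_A i j a : point (N - d) i j -> Req phi RA (collapse i j) a ->
  exists k, point (N - d) j k /\ obs phi (collapse j k) a.
Proof.
  destruct HL as (_ & _ & HB & Hf); intros Hij Hr.
  destruct (Nat.le_gt_cases j y) as [Hj | Hj].
  - rewrite collapse_low in Hr by solve_point.
    destruct (Hf i j RA a ltac:(solve_point) Hr) as (x' & w & Hjw & Hx & Ho); simpl in Hx; subst x'.
    destruct (Nat.le_gt_cases w y) as [Hw | Hw]; [| destruct (Nat.eq_dec j y) as [-> | Hjy]].
    + exists w; rewrite collapse_low by solve_point; close_by_bounds.
    + destruct (g_spec i ltac:(solve_point)) as [Hgi Hrow]; rewrite <- Hrow in Hr.
      destruct (Hf (g i) (y + d) RA a ltac:(solve_point) Hr) as (x' & w' & Hw' & Hx & Ho');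
        simpl in Hx; subst x'.
      exists (w' - d); rewrite collapse_high, collapse_col_high by solve_point.
      replace (w' - d + d) with w' by solve_point; close_by_bounds.
    + assert (Hr' : Req phi RBbar (collapse j y) a).
      { rewrite collapse_low by solve_point.
        apply (HB j w j y ltac:(solve_point) ltac:(solve_point) ltac:(solve_point)).
        left; exact Ho. }
      destruct (collapse_fulfil_Bbar j y a ltac:(solve_point) Hr') as (k & Hyk & HkN & Hk).
      exists k; close_by_bounds.
  - rewrite collapse_high in Hr by solve_point.
    destruct (Hf _ _ RA a (collapse_col_point i j ltac:(solve_point) Hj ltac:(solve_point)) Hr)
      as (x' & w & Hw & Hx & Ho); simpl in Hx; subst x'.
    exists (w - d); rewrite collapse_high, collapse_col_high by solve_point.
    replace (w - d + d) with w by solve_point; close_by_bounds.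
Qed.

Lemma collapse_fulfil_B i j a : point (N - d) i j -> Req phi RB (collapse i j) a ->
  exists k, i < k /\ k < j /\ obs phi (collapse i k) a.
Proof.
  destruct HL as (_ & _ & HB & Hf); intros Hij Hr.
  destruct (Nat.le_gt_cases j y) as [Hj | Hj].
  - rewrite collapse_low in Hr by solve_point.
    destruct (Hf i j RB a ltac:(solve_point) Hr) as (x' & u & Hiu & [<- Huj] & Ho).
    exists u; rewrite collapse_low by solve_point; close_by_bounds.
  - rewrite collapse_high in Hr by solve_point.
    destruct (Hf _ _ RB a (collapse_col_point i j ltac:(solve_point) Hj ltac:(solve_point)) Hr)
      as (x' & u & Hu & [<- Huj] & Ho).
    destruct (Nat.le_gt_cases u (y + d)) as [Hu' | Hu'].
    + assert (Hi : i < y).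
      { destruct (Nat.lt_ge_cases i y) as [Hi | Hi]; auto.
        rewrite collapse_col_high in Hu by exact Hi; solve_point. }
      rewrite collapse_col_low in Hu, Ho by exact Hi.
      destruct (g_spec i Hi) as [Hgi Hrow].
      destruct (Nat.eq_dec u (y + d)) as [-> | Hne].
      * exists y; rewrite collapse_low, <- Hrow by solve_point; close_by_bounds.
      * assert (Hr' : Req phi RB (L i y) a).
        { rewrite <- Hrow.
          apply (HB (g i) (y + d) (g i) u ltac:(solve_point) ltac:(solve_point) ltac:(solve_point)).
          left; exact Ho. }
        destruct (Hf i y RB a ltac:(solve_point) Hr') as (x' & v & Hv & [<- Hvy] & Ho').
        exists v; rewrite collapse_low by solve_point; close_by_bounds.
    + exists (u - d); rewrite collapse_high by solve_point.
      replace (u - d + d) with u by solve_point.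
      destruct (Nat.lt_ge_cases i y) as [Hi | Hi];
        [| rewrite collapse_col_high in Hu by exact Hi]; close_by_bounds.
Qed.

Lemma collapse_compass : compass phi (N - d) collapse.
Proof.
  split; [| split; [| split]].
  - exact collapse_atom.
  - intros i j j' k Hij Hjk ->; apply collapse_leadsto_A; auto.
  - intros i j i' j' Hij Hij' [<- Hj']; apply collapse_leadsto_B; auto.
  - intros i j [] a Hij Hr.
    + destruct (collapse_fulfil_A i j a Hij Hr) as (k & Hjk & Ho).
      exists j, k; close_by_bounds.
    + destruct (collapse_fulfil_B i j a Hij Hr) as (k & Hik & Hkj & Ho).
      exists i, k; close_by_bounds.
    + destruct (collapse_fulfil_Bbar i j a Hij Hr) as (k & Hjk & HkN & Ho).
      exists i, k; close_by_bounds.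
Qed.

End Contraction.

Fixpoint bits_value (l : list bool) : nat :=
  match l with
  | [] => 0
  | b :: l => (if b then 1 else 0) + 2 * bits_value l
  end.

Lemma bits_value_inj l1 l2 :
  length l1 = length l2 -> bits_value l1 = bits_value l2 -> l1 = l2.
Proof.
  revert l2; induction l1 as [| b1 l1 IH]; intros [| b2 l2] Hl Hv; simpl in *;
    try discriminate; auto.
  assert (b1 = b2 /\ bits_value l1 = bits_value l2) as [-> Hv'] by (destruct b1, b2; lia).
  f_equal; apply IH; auto.
Qed.

Lemma bits_value_lt l : bits_value l < 2 ^ length l.
Proof. induction l as [| [|] l IH]; simpl; lia. Qed.

Lemma bits_value_pos l : 0 < bits_value l <-> In true l.
Proof.
  induction l as [| [|] l IH]; simpl.
  - split; [lia | tauto].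
  - split; [auto | lia].
  - rewrite <- IH; split; [lia | intros [? | ?]; [discriminate | lia]].
Qed.

Definition bit (P : Prop) : bool := if excluded_middle_informative P then true else false.

Lemma bit_true P : bit P = true <-> P.
Proof. unfold bit; destruct (excluded_middle_informative P); split; auto; discriminate. Qed.

Lemma pigeonhole (f : nat -> nat) m K : (forall i, i < m -> f i < K) -> K < m ->
  exists i j, i < j /\ j < m /\ f i = f j.
Proof.
  intros Hf HKm; apply NNPP; intro Hinj.
  assert (Hnd : NoDup (map f (seq 0 m))).
  { apply NoDup_map_NoDup_ForallPairs; [| apply seq_NoDup].
    intros i j Hi Hj Hij; apply in_seq in Hi, Hj; apply NNPP; intro Hne.
    destruct (proj1 (Nat.lt_gt_cases i j) Hne) as [Hlt | Hlt]; apply Hinj;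
      [exists i, j | exists j, i]; repeat split; auto; lia. }
  assert (Hincl : incl (map f (seq 0 m)) (seq 0 K)).
  { intros v Hv; apply in_map_iff in Hv as (i & <- & Hi); apply in_seq in Hi.
    apply in_seq; specialize (Hf i); lia. }
  pose proof (NoDup_incl_length Hnd Hincl); rewrite length_map, !length_seq in *; lia.
Qed.

(* An atom is determined by these seven formulas per subformula [b]: every other
   member of [Cl^+] is the negation of one of them. *)
Definition closure_keys (phi : formula) : list formula :=
  flat_map (fun b => [nf b; Dia RA (nf b); Dia RB (nf b); Dia RBbar (nf b);
                      Dia RA (neg (nf b)); Dia RB (neg (nf b)); Dia RBbar (neg (nf b))])
    (nodup formula_eq_dec (subformulas phi)).

Lemma closure_keys_length phi : length (closure_keys phi) = 7 * fsize phi.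
Proof.
  unfold closure_keys, fsize.
  induction (nodup formula_eq_dec (subformulas phi)) as [| b l IH]; simpl; lia.
Qed.

Lemma in_closure_keys phi b k : subformula b phi ->
  In k [nf b; Dia RA (nf b); Dia RB (nf b); Dia RBbar (nf b);
        Dia RA (neg (nf b)); Dia RB (neg (nf b)); Dia RBbar (neg (nf b))] ->
  In k (closure_keys phi).
Proof. intros Hb Hk; apply in_flat_map; exists b; split; [apply nodup_In |]; auto. Qed.

Lemma atom_eq_on_closure_keys phi F G : atom phi F -> atom phi G ->
  (forall k, In k (closure_keys phi) -> F k <-> G k) -> F = G.
Proof.
  intros (_ & F_cl & F_neg & _) (_ & G_cl & G_neg & _) Hkeys.
  apply functional_extensionality; intro a; apply propositional_extensionality.
  destruct (classic (InClp phi a)) as [Ha | Ha];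
    [| split; intro H; exfalso; apply Ha; auto].
  assert (Hflip : In (neg a) (closure_keys phi) -> F a <-> G a).
  { intro Hk; rewrite (F_neg a Ha), (G_neg a Ha), (Hkeys _ Hk); tauto. }
  destruct Ha as [(b & Hb & [-> | ->]) | (R & c & (b & Hb & [-> | ->]) & [-> | ->])].
  - apply Hkeys, (in_closure_keys phi b); simpl; auto.
  - apply Hflip; rewrite neg_involutive_nf; apply (in_closure_keys phi b); simpl; auto.
  - apply Hkeys, (in_closure_keys phi b); destruct R; simpl; tauto.
  - apply Hflip, (in_closure_keys phi b); destruct R; simpl; tauto.
  - apply Hkeys, (in_closure_keys phi b); destruct R; simpl; tauto.
  - apply Hflip, (in_closure_keys phi b); destruct R; simpl; tauto.
Qed.

Definition atom_code (phi : formula) (F : formula -> Prop) : nat :=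
  bits_value (map (fun k => bit (F k)) (closure_keys phi)).

Lemma atom_code_lt phi F : atom_code phi F < 2 ^ (7 * fsize phi).
Proof.
  unfold atom_code; rewrite <- closure_keys_length, <- (length_map (fun k => bit (F k))).
  apply bits_value_lt.
Qed.

Lemma atom_code_inj phi F G : atom phi F -> atom phi G ->
  atom_code phi F = atom_code phi G -> F = G.
Proof.
  intros HF HG Hc; apply bits_value_inj in Hc; [| rewrite !length_map; reflexivity].
  apply (atom_eq_on_closure_keys phi); auto; intros k Hk.
  pose proof (proj1 map_ext_in_iff Hc k Hk) as E; simpl in E.
  rewrite <- (bit_true (F k)), <- (bit_true (G k)), E; reflexivity.
Qed.

Definition row_code (phi : formula) (L : nat -> nat -> formula -> Prop) (r : nat) : nat :=
  bits_value (map (fun c => bit (exists x, x < r /\ atom_code phi (L x r) = c))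
                  (seq 0 (2 ^ (7 * fsize phi)))).

Lemma row_code_lt phi L r : row_code phi L r < 2 ^ (2 ^ (7 * fsize phi)).
Proof.
  unfold row_code; rewrite <- (length_seq (2 ^ (7 * fsize phi)) 0) at 2.
  rewrite <- (length_map (fun c => bit (exists x, x < r /\ atom_code phi (L x r) = c))).
  apply bits_value_lt.
Qed.

Lemma row_code_pos phi L r : 0 < row_code phi L r <-> 0 < r.
Proof.
  unfold row_code; rewrite bits_value_pos, in_map_iff; split.
  - intros (c & Hc & _); apply bit_true in Hc as (x & Hx & _); lia.
  - intro Hr; exists (atom_code phi (L 0 r)); split.
    + apply bit_true; exists 0; auto.
    + apply in_seq; pose proof (atom_code_lt phi (L 0 r)); lia.
Qed.

Lemma row_code_eq phi N L r r' : compass phi N L -> r < N -> r' < N ->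
  row_code phi L r = row_code phi L r' ->
  forall x, x < r -> exists x', x' < r' /\ L x' r' = L x r.
Proof.
  intros [Hat _] Hr Hr' Hcode x Hx.
  apply bits_value_inj in Hcode; [| rewrite !length_map; reflexivity].
  assert (Hin : In (atom_code phi (L x r)) (seq 0 (2 ^ (7 * fsize phi))))
    by (apply in_seq; pose proof (atom_code_lt phi (L x r)); lia).
  pose proof (proj1 map_ext_in_iff Hcode _ Hin) as E; simpl in E.
  assert (Hbit : bit (exists x0, x0 < r /\ atom_code phi (L x0 r) = atom_code phi (L x r)) = true)
    by (apply bit_true; eauto).
  rewrite E in Hbit; apply bit_true in Hbit as (x' & Hx' & Hc).
  exists x'; split; auto.
  apply (atom_code_inj phi); auto; apply Hat; solve_point.
Qed.

Lemma compass_shrink phi N L : compass phi N L -> 2 ^ (2 ^ (7 * fsize phi)) < N ->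
  exists N' L', N' < N /\ 1 < N' /\ compass phi N' L' /\ L' 0 1 = L 0 1.
Proof.
  intros HL HN.
  destruct (pigeonhole (row_code phi L) N _ (fun r _ => row_code_lt phi L r) HN)
    as (r & r' & Hrr' & Hr'N & Hcode).
  assert (Hr : 0 < r) by (apply (row_code_pos phi L); rewrite Hcode; apply row_code_pos; lia).
  assert (Hex : forall x, exists x', x < r -> x' < r' /\ L x' r' = L x r).
  { intro x; destruct (Nat.lt_ge_cases x r) as [Hx | Hx].
    - destruct (row_code_eq phi N L r r' HL ltac:(lia) Hr'N Hcode x Hx) as (x' & ?); eauto.
    - exists 0; lia. }
  destruct (choice _ Hex) as [g Hg].
  assert (Hg' : forall x, x < r -> g x < r + (r' - r) /\ L (g x) (r + (r' - r)) = L x r)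
    by (intros x Hx; replace (r + (r' - r)) with r' by lia; auto).
  exists (N - (r' - r)), (collapse L r (r' - r) g); split; [lia | split; [lia | split]].
  - apply collapse_compass; auto; lia.
  - apply collapse_low; lia.
Qed.

Lemma compass_bounded phi N L : compass phi N L -> 1 < N ->
  exists N' L', N' <= 2 ^ (2 ^ (7 * fsize phi)) /\ 1 < N' /\
                compass phi N' L' /\ L' 0 1 = L 0 1.
Proof.
  revert L; induction N as [N IH] using (well_founded_induction Wf_nat.lt_wf); intros L HL HN.
  destruct (Nat.le_gt_cases N (2 ^ (2 ^ (7 * fsize phi)))) as [Hle | Hgt]; [exists N, L; auto |].
  destruct (compass_shrink phi N L HL Hgt) as (N' & L' & HN' & HN'1 & HL' & H01).
  destruct (IH N' HN' L' HL' HN'1) as (N'' & L'' & ? & ? & ? & H01').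
  exists N'', L''; rewrite H01', H01; auto.
Qed.

Lemma satisfiable_starts phi : finitely_satisfiable phi ->
  exists N s, 1 < N /\ starts phi (truth_label phi N s 0 1) (nf phi).
Proof.
  intros (N & sigma & x0 & y0 & Hxy & HyN & Hsat).
  exists (N - x0), (fun x y p => sigma (x + x0) (y + x0) p); split; [lia |].
  assert (Hs : sat (N - x0) (fun x y p => sigma (x + x0) (y + x0) p) 0 (y0 - x0) (nf phi)).
  { rewrite sat_nf, sat_shift; replace (0 + x0) with x0 by lia.
    replace (y0 - x0 + x0) with y0 by lia; exact Hsat. }
  assert (Hphi : InCl phi (nf phi)) by apply InCl_nf, subformula_refl.
  unfold starts; rewrite truth_label_obs, !truth_label_Req; simpl.
  destruct (Nat.eq_dec (y0 - x0) 1) as [E | E].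
  - left; rewrite <- E; auto.
  - right; right; split; auto; exists (y0 - x0); repeat split; auto; lia.
Qed.

Theorem theorem1 (phi : formula) :
  finitely_satisfiable phi <->
  exists (N : nat) (L : nat -> nat -> formula -> Prop),
    N <= 2 ^ (2 ^ (7 * fsize phi)) /\ compass phi N L /\ features L N phi.
Proof.
  split.
  - intro Hsat; destruct (satisfiable_starts phi Hsat) as (N & s & HN & Hstarts).
    destruct (compass_bounded phi N _ (truth_label_compass phi N s) HN)
      as (N' & L & Hle & HN' & HL & H01).
    exists N', L; split; [| split]; auto.
    rewrite <- H01 in Hstarts.
    destruct (compass_starts_fulfilled phi N' L 0 1 (nf phi) HL ltac:(solve_point) Hstarts)
      as (y & Hp & Hy).
    exists 0, y; auto.
  - intros (N & L & _ & HL & x & y & Hp & Hphi).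
    exists N, (fun x y p => L x y (Var p)), x, y; split; [| split]; try solve_point.
    apply (compass_truth_lemma phi N L HL phi (subformula_refl phi) x y Hp), Hphi.
Qed.
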